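(* Let $n\ge2$ and let $C\subset\mathbb{S}^{n-1}$ be a spherical code with $|C|=n+1$, and let $y_C:=\frac{1}{n+1}\sum_{y\in C}y$ be its centroid. Then there exists $x\in\mathbb{S}^{n-1}$ with $x\cdot y\in[-1,1/n]$ for all $y\in C$, and $$\min\{x\cdot y_C:\ x\in\mathbb{S}^{n-1},\ x\cdot y\in[-1,1/n]\ \text{for all } y\in C\}\le0.$$
   Context: $\mathbb{S}^{n-1}$ is the unit sphere in $\mathbb{R}^n$; a spherical code is a finite set of distinct points on it. *)

From HB Require Import structures.
From mathcomp Require Import all_boot all_order all_algebra.
From mathcomp Require Import reals.
Set Implicit Arguments. Unset Strict Implicit. Unset Printing Implicit Defensive.
Import Order.TTheory GRing.Theory Num.Theory.
Local Open Scope ring_scope.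

Definition dotv (R : realType) (n : nat) (x y : 'rV[R]_n) : R :=
  \sum_(i < n) x 0 i * y 0 i.

Definition on_sphere (R : realType) (n : nat) (x : 'rV[R]_n) : Prop :=
  dotv x x = 1.

Definition centroid (R : realType) (n m : nat) (c : 'I_m -> 'rV[R]_n) : 'rV[R]_n :=
  (m%:R)^-1 *: \sum_(j < m) c j.

Definition feasible (R : realType) (n m : nat) (c : 'I_m -> 'rV[R]_n)
  (x : 'rV[R]_n) : Prop :=
  on_sphere x /\ forall j : 'I_m, -1 <= dotv x (c j) <= (n%:R)^-1.

From HB Require Import structures.
From mathcomp Require Import all_boot all_order all_algebra.
From mathcomp Require Import reals.
From mathcomp Require Import ring lra.
From mathcomp Require Import classical_sets topology normedtype derive.
Set Implicit Arguments. Unset Strict Implicit. Unset Printing Implicit Defensive.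
Import Order.TTheory GRing.Theory Num.Theory.
Import numFieldNormedType.Exports.
Local Open Scope classical_set_scope.
Local Open Scope ring_scope.

(* If the code points span a proper subspace, a unit vector orthogonal to all
   of them is feasible with value 0.  Otherwise they satisfy a single linear
   relation [sum_j l_j c_j = 0], which we normalise to [sum_j l_j >= 0]; then
   the value vectors [(x . c_j)_j] fill the hyperplane orthogonal to [l], and
   it contains a target [t] with [t_k = -1], [t_j <= 1/n] and [sum_j t_j <= 0].
   Since [|x| >= |x . c_k| = 1], normalising a preimage [x] of [t] keeps every
   [x . c_j <= 1/n].  The minimum itself exists because the feasible set is
   compact. *)

Section DotProduct.
Variables (R : realType) (n : nat).
Implicit Types x y v : 'rV[R]_n.

Lemma dotvC x y : dotv x y = dotv y x.
Proof. by apply: eq_bigr => i _; rewrite mulrC. Qed.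

Lemma dotvDl x y v : dotv (x + y) v = dotv x v + dotv y v.
Proof. by rewrite /dotv -big_split; apply: eq_bigr => i _; rewrite mxE mulrDl. Qed.

Lemma dotvZl a x y : dotv (a *: x) y = a * dotv x y.
Proof. by rewrite /dotv mulr_sumr; apply: eq_bigr => i _; rewrite mxE mulrA. Qed.

Lemma dotv0l y : dotv 0 y = 0.
Proof. by rewrite -(scale0r 0) dotvZl mul0r. Qed.

Lemma dotvNl x y : dotv (- x) y = - dotv x y.
Proof. by rewrite -scaleN1r dotvZl mulN1r. Qed.

Lemma dotvBl x y v : dotv (x - y) v = dotv x v - dotv y v.
Proof. by rewrite dotvDl dotvNl. Qed.

Lemma dotv_sumr m x (f : 'I_m -> 'rV[R]_n) :
  dotv x (\sum_(j < m) f j) = \sum_(j < m) dotv x (f j).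
Proof.
rewrite /dotv exchange_big /=; apply: eq_bigr => i _.
by rewrite summxE mulr_sumr.
Qed.

Lemma dotv_ge0 x : 0 <= dotv x x.
Proof. by apply: sumr_ge0 => i _; rewrite -expr2 sqr_ge0. Qed.

Lemma dotv_gt0 x : x != 0 -> 0 < dotv x x.
Proof.
move=> x_neq0; rewrite lt_def dotv_ge0 andbT; apply: contraNN x_neq0 => /eqP xx0.
apply/eqP/rowP => i; rewrite mxE; apply/eqP; rewrite -sqrf_eq0 expr2.
by apply/eqP/(psumr_eq0P _ xx0) => // k _; rewrite -expr2 sqr_ge0.
Qed.

Lemma dotv_deltal m (k : 'I_m) (u : 'rV[R]_m) : dotv 'e_k u = u 0 k.
Proof.
rewrite /dotv (bigD1 k) //= mxE !eqxx mul1r big1 ?addr0 // => j /negbTE jk.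
by rewrite mxE jk andbF mul0r.
Qed.

Lemma dotv_const1l m (u : 'rV[R]_m) : dotv (const_mx 1) u = \sum_j u 0 j.
Proof. by apply: eq_bigr => j _; rewrite mxE mul1r. Qed.

Lemma mulmx_tr_rowsE m x (c : 'I_m -> 'rV[R]_n) j :
  (x *m (\matrix_i c i)^T) 0 j = dotv x (c j).
Proof. by rewrite !mxE; apply: eq_bigr => i _; rewrite !mxE. Qed.

Lemma dotv_ge_m1 x y : on_sphere x -> on_sphere y -> -1 <= dotv x y.
Proof.
move=> x1 y1; have := dotv_ge0 (x + y).
rewrite dotvDl !(dotvC _ (x + y)) !dotvDl x1 y1 (dotvC y x); lra.
Qed.

Lemma on_sphere_coord_le1 x i : on_sphere x -> `|x 0 i| <= 1.
Proof.
move=> x1; rewrite -(ler_pXn2r (isT : (0 < 2)%N)) ?nnegrE //.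
rewrite expr1n real_normK ?num_real //.
rewrite -x1 /dotv (bigD1 i) //= expr2 lerDl.
by apply: sumr_ge0 => j _; rewrite -expr2 sqr_ge0.
Qed.

Definition normv x := Num.sqrt (dotv x x).

Lemma sqr_normv x : normv x ^+ 2 = dotv x x.
Proof. by rewrite sqr_sqrtr // dotv_ge0. Qed.

Lemma normv_gt0 x : x != 0 -> 0 < normv x.
Proof. by move/dotv_gt0; rewrite sqrtr_gt0. Qed.

(* Cauchy-Schwarz against a unit vector: expand |x - (x.v) v|^2 >= 0. *)
Lemma normv_ge_dotv x v : on_sphere v -> `|dotv x v| <= normv x.
Proof.
move=> v1; rewrite -sqrtr_sqr ler_wsqrtr //.
have := dotv_ge0 (x - dotv x v *: v).
rewrite !dotvBl !(dotvC _ (x - _)) !dotvBl (dotvC x (_ *: v)) !dotvZl.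
rewrite (dotvC v (_ *: v)) dotvZl v1 (dotvC v x); nra.
Qed.

Definition normalize x := (normv x)^-1 *: x.

Lemma dotv_normalize x y : dotv (normalize x) y = (normv x)^-1 * dotv x y.
Proof. exact: dotvZl. Qed.

Lemma on_sphere_normalize x : x != 0 -> on_sphere (normalize x).
Proof.
move=> /normv_gt0 x_gt0; rewrite /on_sphere dotv_normalize dotvC dotv_normalize.
by rewrite mulrA -expr2 -sqr_normv -exprMn mulVf ?expr1n ?gt_eqF.
Qed.

Lemma continuous_dotv (T : topologicalType) (f g : T -> 'rV[R]_n) :
  continuous f -> continuous g -> continuous (fun t => dotv (f t) (g t)).
Proof.
move=> cf cg; apply: (continuous_big add_continuous) => i _ t.
have coord (h : T -> 'rV[R]_n) :
    continuous h -> {for t, continuous (fun s => h s 0 i : R)}.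
  by move=> ch; exact: continuous_comp (ch t) (@coord_continuous _ _ _ 0 i (h t)).
exact: continuousM (coord _ cf) (coord _ cg).
Qed.

Lemma continuous_dotvl y : continuous (fun x => dotv x y).
Proof. by apply: continuous_dotv => [x|]; [exact: cvg_id | exact: cst_continuous]. Qed.

End DotProduct.

Lemma mulmx_trE (R : realType) m (x y : 'rV[R]_m) : (x *m y^T) 0 0 = dotv x y.
Proof. by rewrite !mxE; apply: eq_bigr => i _; rewrite !mxE. Qed.

Lemma kernel_vector_sum_ge0 (F : realFieldType) p m (A : 'M[F]_(p, m)) :
  (\rank A < p)%N -> exists l : 'rV_p, [/\ l *m A = 0, l != 0 & 0 <= \sum_j l 0 j].
Proof.
move=> rkA; have : kermx A != 0 by rewrite kermx_eq0 /row_free neq_ltn rkA.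
case/rowV0Pn => l /sub_kermxP lA l_neq0.
have [l_sum | l_sum] := leP 0 (\sum_j l 0 j); first by exists l.
exists (- l); split; rewrite ?mulNmx ?lA ?oppr0 ?oppr_eq0 //.
by rewrite (eq_bigr _ (fun j _ => mxE _ _ _ _)) sumrN oppr_ge0 ltW.
Qed.

Lemma corank1_kermx_tr_sub (F : fieldType) p m (A : 'M[F]_(p, m.+1))
    (l : 'rV_m.+1) :
  l != 0 -> A *m l^T = 0 -> \rank A = m -> (kermx l^T <= A)%MS.
Proof.
move=> l_neq0 Al rkA; have A_sub : (A <= kermx l^T)%MS by apply/sub_kermxP.
suff /eqmxP -> : (A == kermx l^T)%MS by [].
by rewrite -(mxrank_leqif_eq A_sub) mxrank_ker mxrank_tr rank_rV l_neq0 rkA subn1.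
Qed.

Lemma exists_gt0_entry (F : realDomainType) m (l : 'rV[F]_m) :
  l != 0 -> 0 <= \sum_j l 0 j -> exists q, 0 < l 0 q.
Proof.
move=> l_neq0 l_sum; apply/existsP; apply: contraNT l_neq0 => /existsPn l_le0.
have Nl_ge0 j : 0 <= - l 0 j by rewrite oppr_ge0 leNgt l_le0.
have Nl_sum : \sum_j - l 0 j = 0.
  by apply/eqP; rewrite eq_le sumr_ge0 // andbT sumrN oppr_le0.
by apply/eqP/rowP => j; rewrite mxE -[LHS]opprK (psumr_eq0P _ Nl_sum) ?oppr0.
Qed.

Lemma exists_gt0_entry_neq_min (F : realDomainType) m (l : 'rV[F]_m) k :
  (1 < m)%N -> (forall j, l 0 k <= l 0 j) -> l != 0 -> 0 <= \sum_j l 0 j ->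
  exists2 p, p != k & 0 < l 0 p.
Proof.
move=> m_gt1 k_min l_neq0 l_sum; have [q lq] := exists_gt0_entry l_neq0 l_sum.
have [qk | ] := eqVneq q k; last by exists q.
have : (0 < #|predC1 k|)%N by rewrite cardC1 card_ord -subn1 subn_gt0.
case/card_gt0P => p /[!inE] pk; exists p => //.
by apply: lt_le_trans (k_min p); rewrite -qk.
Qed.

(* With [k] a minimal entry of [l] and [l_p > 0], the vector
   [t = 1/n - (1 + 1/n) e_k - a e_p] has [t_k = -1], all other entries at
   most [1/n], and is orthogonal to [l] for the unique [a], which is
   nonnegative because [(n + 1) l_k <= sum l]. *)
Lemma exists_orthogonal_target (R : realType) n (l : 'rV[R]_n.+1) :
  (0 < n)%N -> l != 0 -> 0 <= \sum_j l 0 j ->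
  exists t : 'rV[R]_n.+1, exists k,
    [/\ t *m l^T = 0, t 0 k = -1, forall j, t 0 j <= n%:R^-1
      & \sum_j t 0 j <= 0].
Proof.
move=> n_gt0 l_neq0 l_sum; set N : R := n%:R^-1; set L := \sum_j l 0 j in l_sum.
have N_gt0 : 0 < N by rewrite invr_gt0 ltr0n.
have nN : n.+1%:R * N = 1 + N by rewrite -natr1 mulrDl mulfV ?mul1r ?pnatr_eq0 -?lt0n.
have [k _ k_min] := arg_minP (fun j => l 0 j) (isT : predT ord0).
have {}k_min j : l 0 k <= l 0 j by exact: k_min.
have [p pk lp_gt0] := exists_gt0_entry_neq_min (n_gt0 : (1 < n.+1)%N) k_min l_neq0 l_sum.
have lk_le : n.+1%:R * l 0 k <= L.
  have -> : n.+1%:R * l 0 k = \sum_(j < n.+1) l 0 k.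
    by rewrite sumr_const card_ord mulr_natl.
  by apply: ler_sum => j _; exact: k_min.
pose a := (N * L - (1 + N) * l 0 k) / l 0 p.
have a_ge0 : 0 <= a.
  rewrite /a; have -> : N * L - (1 + N) * l 0 k = N * (L - n.+1%:R * l 0 k).
    by rewrite -nN; ring.
  by rewrite divr_ge0 ?mulr_ge0 ?subr_ge0 // ltW.
pose t : 'rV[R]_n.+1 := N *: const_mx 1 - (1 + N) *: 'e_k - a *: 'e_p.
have dotv_t u : dotv t u = N * \sum_j u 0 j - (1 + N) * u 0 k - a * u 0 p.
  by rewrite !dotvBl !dotvZl dotv_const1l !dotv_deltal.
exists t, k; split.
- apply/rowP => i; rewrite ord1 mulmx_trE dotv_t mxE.
  by rewrite /a mulfVK ?gt_eqF // subrr.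
- by rewrite !mxE !eqxx eq_sym (negbTE pk) /=; ring.
- move=> j; rewrite !mxE /=.
  by case: (j == k); case: (j == p); rewrite /= ?mulr0 ?mulr1; lra.
- rewrite -dotv_const1l dotvC dotv_t.
  rewrite (eq_bigr (fun=> 1)) => [|j _]; last by rewrite mxE.
  by rewrite !mxE sumr_const card_ord -mulr_natr mul1r mulrC nN; lra.
Qed.

Section SphericalCode.
Variables (R : realType) (n m : nat) (c : 'I_m -> 'rV[R]_n).
Hypothesis c_sph : forall j, on_sphere (c j).

Lemma dotv_centroid x : dotv x (centroid c) = m%:R^-1 * dotv x (\sum_j c j).
Proof. by rewrite dotvC dotvZl dotvC. Qed.

Lemma feasible_normalize x :
  x != 0 -> (forall j, dotv x (c j) <= n%:R^-1 * normv x) ->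
  feasible c (normalize x).
Proof.
move=> x_neq0 xc_le; have x1 := on_sphere_normalize x_neq0; split => // j.
by rewrite dotv_ge_m1 //= dotv_normalize ler_pdivrMl ?normv_gt0 // mulrC.
Qed.

Lemma compact_feasible : compact [set x | feasible c x].
Proof.
apply: bounded_closed_compact.
  apply: filterS (nbhs_pinfty_ge (@real1 R)) => M M_ge1 x [x1 _].
  apply: le_trans M_ge1; rewrite [leLHS]/Num.Def.normr /= mx_normrE.
  by apply: bigmax_le => // ij _; rewrite (ord1 ij.1) on_sphere_coord_le1.
have -> : [set x | feasible c x] = (fun x => dotv x x) @^-1` [set 1] `&`
   \bigcap_(j in setT) ((fun x => dotv x (c j)) @^-1` [set y | -1 <= y] `&`
                        (fun x => dotv x (c j)) @^-1` [set y | y <= n%:R^-1]).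
  apply/seteqP; split => x /= [x1 xc]; split => // j.
    by move=> _; have /andP[] := xc j.
  by have [] := xc j I => /= -> ->.
have dotvxx_cont : continuous (fun x : 'rV[R]_n => dotv x x).
  by apply: continuous_dotv => x; exact: cvg_id.
apply: closedI.
  by apply: preimage_closed => [x _|]; [exact: dotvxx_cont | exact: closed_eq].
apply: closed_bigI => j _; apply: closedI.
  by apply: preimage_closed => [x _|]; [exact: continuous_dotvl | exact: closed_ge].
by apply: preimage_closed => [x _|]; [exact: continuous_dotvl | exact: closed_le].
Qed.

End SphericalCode.

Lemma exists_dotv_target (R : realType) n (c : 'I_n.+1 -> 'rV[R]_n) :
  (0 < n)%N -> \rank (\matrix_j c j) = n ->
  exists x, exists k, [/\ dotv x (c k) = -1,
    forall j, dotv x (c j) <= n%:R^-1 & dotv x (\sum_j c j) <= 0].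
Proof.
set C := \matrix_j c j => n_gt0 rkC.
have [l [lC l_neq0 l_sum]] :
    exists l : 'rV_n.+1, [/\ l *m C = 0, l != 0 & 0 <= \sum_j l 0 j].
  by apply: kernel_vector_sum_ge0; rewrite rkC.
have [t [k [tl tk t_le t_sum]]] := exists_orthogonal_target n_gt0 l_neq0 l_sum.
have /submxP [x tx] : (t <= C^T)%MS.
  apply: submx_trans (corank1_kermx_tr_sub l_neq0 _ _); first exact/sub_kermxP.
    by rewrite -trmx_mul lC trmx0.
  by rewrite mxrank_tr.
have xc j : dotv x (c j) = t 0 j by rewrite -mulmx_tr_rowsE -tx.
exists x, k; split=> [|j|]; rewrite ?xc //.
by rewrite dotv_sumr (eq_bigr _ (fun j _ => xc j)).
Qed.

Lemma exists_feasible_dotv_sum_le0 (R : realType) n (c : 'I_n.+1 -> 'rV[R]_n) :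
  (0 < n)%N -> (forall j, on_sphere (c j)) ->
  exists x, feasible c x /\ dotv x (\sum_j c j) <= 0.
Proof.
move=> n_gt0 c_sph.
suff [x [x_neq0 xc_le xs_le0]] : exists x, [/\ x != 0,
    forall j, dotv x (c j) <= n%:R^-1 * normv x & dotv x (\sum_j c j) <= 0].
  exists (normalize x); split; first exact: feasible_normalize.
  by rewrite dotv_normalize pmulr_rle0 // invr_gt0 normv_gt0.
have N_ge0 : 0 <= n%:R^-1 :> R by rewrite invr_ge0.
have [rkC_lt | rkC_ge] := ltnP (\rank (\matrix_j c j)) n.
  have : kermx (\matrix_j c j)^T != 0.
    by rewrite kermx_eq0 /row_free mxrank_tr neq_ltn rkC_lt.
  case/rowV0Pn => x /sub_kermxP xC x_neq0.
  have xc j : dotv x (c j) = 0 by rewrite -mulmx_tr_rowsE xC mxE.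
  exists x; split=> // [j|]; first by rewrite xc mulr_ge0 // ltW ?normv_gt0.
  by rewrite dotv_sumr big1.
have rkC : \rank (\matrix_j c j) = n.
  by apply/eqP; rewrite eqn_leq rkC_ge rank_leq_col.
have [x [k [xck xc_le xs_le0]]] := exists_dotv_target n_gt0 rkC.
have normv_ge1 : 1 <= normv x by rewrite -normrN1 -xck normv_ge_dotv.
exists x; split => // [|j].
  by apply/eqP => x0; move: xck; rewrite x0 dotv0l; lra.
by rewrite (le_trans (xc_le j)) // ler_peMr.
Qed.

Theorem lemma6p3 (R : realType) (n : nat) (hn : (2 <= n)%N)
  (c : 'I_n.+1 -> 'rV[R]_n) (c_inj : injective c)
  (c_sph : forall j, on_sphere (c j)) :
  (exists x : 'rV[R]_n, feasible c x) /\
  (exists x0 : 'rV[R]_n,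
     [/\ feasible c x0,
         (forall x : 'rV[R]_n, feasible c x -> dotv x0 (centroid c) <= dotv x (centroid c))
       & dotv x0 (centroid c) <= 0]).
Proof.
have [x1 [x1_feas x1_sum]] := exists_feasible_dotv_sum_le0 (ltnW hn) c_sph.
split; first by exists x1.
have [z /[!inE] z_feas z_min] := EVT_min_rV (ex_intro _ x1 x1_feas)
  (compact_feasible (c := c)) (continuous_subspaceT (continuous_dotvl (y := centroid c))).
exists z; split => // [x x_feas|]; first by apply: z_min; rewrite inE.
apply: le_trans (z_min x1 _) _; first by rewrite inE.
by rewrite dotv_centroid pmulr_rle0 // invr_gt0 ltr0n.
Qed.
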